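(* Let $X=X_\Sigma$ be the projective toric manifold described in the context (Picard number three, no Fano contraction, with parameters $p_0,\dots,p_4$, $b_1,\dots,b_{p_3}$, $c_2,\dots,c_{p_2}$, normalized so that $c_2=\min\{c_2,\dots,c_{p_2}\}$ and $b_1=\min\{b_1,\dots,b_{p_3}\}$). If $\mathrm{ch}_2(X)$ is nef, then $b_1\ge 1$ and $p_2>p_3$; in particular $p_2\ge 2$.
   Context: Let $N=\mathbb{Z}^d$ and let $\Sigma$ be a smooth projective complete fan in $N_\mathbb{R}$ whose set of primitive ray generators is $\{v_1,\dots,v_{p_0},y_1,\dots,y_{p_1},z_1,\dots,z_{p_2},t_1,\dots,t_{p_3},u_1,\dots,u_{p_4}\}$, where $p_0,\dots,p_4$ are positive integers with $p_0+p_1+p_2+p_3+p_4-3=d$. A primitive collection is a set of ray generators not generating a cone of $\Sigma$ while every proper subset does. The primitive collections of $\Sigma$ are exactly $\{v_i\}\cup\{y_j\}$, $\{y_j\}\cup\{z_j\}$, $\{z_j\}\cup\{t_j\}$, $\{t_j\}\cup\{u_j\}$, $\{u_j\}\cup\{v_j\}$ (all elements of the indicated groups), with primitive relations $v_1+\cdots+v_{p_0}+y_1+\cdots+y_{p_1}=c_2z_2+\cdots+c_{p_2}z_{p_2}+(b_1+1)t_1+\cdots+(b_{p_3}+1)t_{p_3}$, $y_1+\cdots+y_{p_1}+z_1+\cdots+z_{p_2}=u_1+\cdots+u_{p_4}$, $z_1+\cdots+z_{p_2}+t_1+\cdots+t_{p_3}=0$, $t_1+\cdots+t_{p_3}+u_1+\cdots+u_{p_4}=y_1+\cdots+y_{p_1}$,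 $u_1+\cdots+u_{p_4}+v_1+\cdots+v_{p_0}=c_2z_2+\cdots+c_{p_2}z_{p_2}+b_1t_1+\cdots+b_{p_3}t_{p_3}$, with $b_i,c_j\in\mathbb{Z}_{\ge0}$, and $c_2=\min_j c_j$, $b_1=\min_i b_i$. (Every projective toric manifold of Picard number three without Fano contraction has such a fan.) $X=X_\Sigma$. With $D_1,\dots,D_n$ the torus invariant prime divisors, $\mathrm{ch}_2(X)=\frac12\sum D_i^2$, and $\mathrm{ch}_2(X)$ is nef if $(\mathrm{ch}_2(X)\cdot S)\ge0$ for every 2-dimensional torus invariant irreducible closed subvariety $S\subset X$. *)

From HB Require Import structures.
From mathcomp Require Import all_boot all_order all_algebra.
Set Implicit Arguments. Unset Strict Implicit. Unset Printing Implicit Defensive.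
Import Order.TTheory GRing.Theory Num.Theory.
Local Open Scope ring_scope.

(* Index set of the ray generators
   v_1..v_p0, y_1..y_p1, z_1..z_p2, t_1..t_p3, u_1..u_p4
   (0-based ordinals: the i-th ordinal of a group is the paper's index i+1). *)
Definition gen (p0 p1 p2 p3 p4 : nat) : finType :=
  ('I_p0 + 'I_p1 + 'I_p2 + 'I_p3 + 'I_p4)%type.

Section Gens.
Context {p0 p1 p2 p3 p4 : nat}.
Definition gv (i : 'I_p0) : gen p0 p1 p2 p3 p4 := inl (inl (inl (inl i))).
Definition gy (i : 'I_p1) : gen p0 p1 p2 p3 p4 := inl (inl (inl (inr i))).
Definition gz (i : 'I_p2) : gen p0 p1 p2 p3 p4 := inl (inl (inr i)).
Definition gt (i : 'I_p3) : gen p0 p1 p2 p3 p4 := inl (inr i).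
Definition gu (i : 'I_p4) : gen p0 p1 p2 p3 p4 := inr i.

Definition grp (r : gen p0 p1 p2 p3 p4) : nat :=
  match r with
  | inl (inl (inl (inl _))) => 0
  | inl (inl (inl (inr _))) => 1
  | inl (inl (inr _)) => 2
  | inl (inr _) => 3
  | inr _ => 4
  end.

(* The five primitive collections {v}u{y}, {y}u{z}, {z}u{t}, {t}u{u}, {u}u{v}. *)
Definition prim_coll (k : 'I_5) : {set gen p0 p1 p2 p3 p4} :=
  [set r | (grp r == k) || (grp r == (k.+1 %% 5)%N)].

(* Cones of Sigma (identified with their sets of ray generators):
   exactly the subsets containing no primitive collection. *)
Definition pc_cone (S : {set gen p0 p1 p2 p3 p4}) : bool :=
  [forall k : 'I_5, ~~ (prim_coll k \subset S)].
End Gens.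

Section Toric.
Variables (d : nat) (G : finType).

(* monomials in the variables x_r (r : G), as exponent vectors *)
Definition mono_deg (m : {ffun G -> nat}) : nat := (\sum_r m r)%N.
Definition unit_mono (r : G) : {ffun G -> nat} := [ffun s => nat_of_bool (s == r)].
Definition set_mono (S : {set G}) : {ffun G -> nat} := [ffun s => nat_of_bool (s \in S)].
Definition madd (m1 m2 : {ffun G -> nat}) : {ffun G -> nat} := [ffun s => (m1 s + m2 s)%N].
Definition msupp (m : {ffun G -> nat}) : {set G} := [set r | (0 < m r)%N].

(* The fan with ray generators w r (r : G) and cones {cone_{w r | r in S} : cone S}
   is a smooth complete fan: every lattice point has a unique expression as a
   nonnegative integral combination of the generators of one cone. *)
Definition smooth_complete_fan (w : G -> 'rV[int]_d) (cone : {set G} -> bool) : Prop :=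
  forall x : 'rV[int]_d,
    exists! a : {ffun G -> nat}, cone (msupp a) /\ \sum_r w r *+ a r = x.

(* deg : degree map A^d(X)_Q -> Q on the Chow ring
   A*(X)_Q = Q[x_r] / (Stanley-Reisner ideal + linear relations),
   given on degree-d monomials. *)
Definition is_chow_degree (w : G -> 'rV[int]_d) (cone : {set G} -> bool)
    (deg : {ffun G -> nat} -> rat) : Prop :=
  [/\ (* Stanley-Reisner: monomials whose support is not a cone vanish *)
      forall m, mono_deg m = d -> ~~ cone (msupp m) -> deg m = 0,
      (* linear relations  sum_r <e_j^*, w r> x_r  *)
      forall (m : {ffun G -> nat}) (j : 'I_d), mono_deg m = d.-1 ->
        \sum_r (w r 0 j)%:~R * deg (madd m (unit_mono r)) = 0
    & (* the class of a torus fixed point V(sigma) = prod_{r in sigma} x_r has degree 1 *)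
      forall S, cone S -> #|S| = d -> deg (set_mono S) = 1].

(* (ch_2(X) . V(tau)) = 1/2 sum_r deg(x_r^2 * x_tau) *)
Definition ch2_dot (deg : {ffun G -> nat} -> rat) (tau : {set G}) : rat :=
  2^-1 * \sum_r deg (madd (set_mono tau) (madd (unit_mono r) (unit_mono r))).

(* ch_2(X) nef: nonnegative on every torus invariant surface V(tau),
   tau a cone of dimension d-2. *)
Definition ch2_nef (w : G -> 'rV[int]_d) (cone : {set G} -> bool) : Prop :=
  exists deg, is_chow_degree w cone deg /\
    forall tau : {set G}, cone tau -> #|tau| = (d - 2)%N -> 0 <= ch2_dot deg tau.
End Toric.

From HB Require Import structures.
From mathcomp Require Import all_boot all_order all_algebra.
From mathcomp Require Import ring lra zify.
Import Order.TTheory GRing.Theory Num.Theory.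
Local Open Scope ring_scope.
Set Implicit Arguments. Unset Strict Implicit. Unset Printing Implicit Defensive.

(* Let tau be the cone spanned by all generators except the first
   one of each group, v1, y1, z1, t1, u1; it has dimension d - 2, so
   (ch_2(X) . V(tau)) = 1/2 sum_r q(r, r) with q(x, y) = deg(x_tau x_x x_y).
   1. General facts (for any smooth complete fan, before the section
      NoFanoContraction): a function on the generators that is orthogonal to every
      rational linear relation among them is a linear form evaluated at them,
      hence gives a linear relation of the Chow ring; in a smooth fan the
      generators of a cone are linearly independent.
   2. For our fan the relations coming from the primitive relations of
      {y,z}, {t,u} and {u,v} span all linear relations (the complement of
      {v1, z1, t1} is a cone).  Hence q(s, -) is linear in the coordinates of
      the generators in the basis dual to z1, t1, v1.
   3. The values of q on pairs of distinct first generators are 1 or 0 according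
      to whether they span a cone with tau; this pins down q on z1, t1, v1 and
      gives q(r, r) for every generator r explicitly.
   4. Summing: 0 <= sum_r q(r, r) <= -p1 + p2 b1 - p3 (b1 + 1) - p4, which forces
      b1 >= 1 and p2 > p3. *)

Lemma sum_enum_val (V : nmodType) (G : finType) (F : G -> V) :
  \sum_r F r = \sum_(i < #|G|) F (enum_val i).
Proof. by rewrite -big_enum_val. Qed.

Lemma orthogonal_to_relations_form (F : fieldType) (G : finType) (d : nat)
    (W : G -> 'rV[F]_d) (f : G -> F) :
  (forall a : G -> F, \sum_r a r *: W r = 0 -> \sum_r a r * f r = 0) ->
  exists lam : 'cV[F]_d, forall r, f r = (W r *m lam) 0 0.
Proof.
move=> horth.
pose Wm := \matrix_(i < #|G|) W (enum_val i).
pose fr := \row_(i < #|G|) f (enum_val i).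
have /submxP [lam flam] : (fr <= Wm^T)%MS.
  rewrite submxE; move: (cokermx Wm^T) (mulmx_coker Wm^T) => K WK.
  apply/eqP/rowP => j; pose a r := K (enum_rank r) j.
  have rel_a : \sum_r a r *: W r = 0.
    apply/rowP => l; rewrite summxE sum_enum_val [RHS]mxE.
    have := congr1 (fun M : 'M_(d, #|G|) => M l j) WK; rewrite !mxE => WKlj.
    rewrite -[RHS]WKlj; apply: eq_bigr => i _.
    by rewrite !mxE /a enum_valK mulrC.
  rewrite !mxE -[RHS](horth a rel_a) [RHS]sum_enum_val; apply: eq_bigr => i _.
  by rewrite !mxE /a enum_valK mulrC.
exists lam^T => r; have := congr1 (fun M : 'rV_#|G| => M 0 (enum_rank r)) flam.
rewrite !mxE enum_rankK => ->.
by apply: eq_bigr => j _; rewrite !mxE enum_rankK mulrC.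
Qed.

Lemma clear_denominators (G : finType) (a : G -> rat) :
  exists2 N : int, N != 0 & exists z : G -> int, forall r, (z r)%:~R = a r * N%:~R.
Proof.
exists (\prod_r denq (a r)); first by apply/prodf_neq0 => r _; exact: denq_neq0.
exists (fun r => numq (a r) * \prod_(s | s != r) denq (a s)) => r.
by rewrite [in RHS](bigD1 r) //= !intrM numqE; ring.
Qed.

Section ChowRelations.
Variables (G : finType) (d : nat) (w : G -> 'rV[int]_d) (cone : {set G} -> bool).

Definition wQ (r : G) : 'rV[rat]_d := map_mx intr (w r).

Definition rat_relation (a : G -> rat) : Prop := \sum_r a r *: wQ r = 0.

Lemma map_intr_relation (k : G -> int) :
  map_mx intr (\sum_r w r *~ k r) = \sum_r (k r)%:~R *: wQ r.
Proof. by rewrite raddf_sum; apply: eq_bigr => r _; rewrite raddfMz scaler_int. Qed.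

Lemma int_rat_relation (k : G -> int) :
  \sum_r w r *~ k r = 0 -> rat_relation (fun r => (k r)%:~R).
Proof. by move=> hk; rewrite /rat_relation -map_intr_relation hk map_mx0. Qed.

Lemma rat_int_relation (a : G -> rat) : rat_relation a ->
  exists2 N : int, N != 0 & exists2 z : G -> int,
    \sum_r w r *~ z r = 0 & forall r, (z r)%:~R = a r * N%:~R.
Proof.
move=> ha; have [N N0 [z hz]] := clear_denominators a.
exists N => //; exists z => //.
have hQ : map_mx intr (\sum_r w r *~ z r) = 0 :> 'rV[rat]_d.
  rewrite map_intr_relation (eq_bigr (fun r => N%:~R *: (a r *: wQ r))).
    by rewrite -scaler_sumr ha scaler0.
  by move=> r _; rewrite hz scalerA mulrC.
apply/rowP => j; have := congr1 (fun M : 'rV[rat]_d => M 0 j) hQ.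
by rewrite !mxE => /eqP; rewrite intr_eq0 => /eqP.
Qed.

Lemma cone_relation_trivial (S : {set G}) (a : G -> rat) :
  smooth_complete_fan w cone -> (forall S' : {set G}, S' \subset S -> cone S') ->
  rat_relation a -> (forall r, r \notin S -> a r = 0) -> forall r, a r = 0.
Proof.
move=> fan coneS ha aS.
have [N N0 [z zrel hz]] := rat_int_relation ha.
have zS r : r \notin S -> z r = 0.
  by move=> /aS ar0; apply: (@intr_inj rat); rewrite hz ar0 mul0r.
pose P := [ffun r => if 0 <= z r then `|z r|%N else 0%N].
pose Q := [ffun r => if z r < 0 then `|z r|%N else 0%N].
have zPQ r : z r = (P r)%:Z - (Q r)%:Z.
  rewrite !ffunE; case: (ltrP (z r) 0) => hr; last by rewrite gez0_abs // subr0.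
  by rewrite ltz0_abs // sub0r opprK.
have coneF (F : {ffun G -> nat}) : (forall r, r \notin S -> F r = 0%N) -> cone (msupp F).
  move=> hF; apply: coneS; apply/subsetP => r; rewrite inE.
  by apply: contraTT => /hF ->.
have sumPQ : \sum_r w r *+ P r = \sum_r w r *+ Q r.
  apply/eqP; rewrite -subr_eq0 -sumrB; apply/eqP; rewrite -[RHS]zrel.
  apply: eq_bigr => r _.
  by rewrite zPQ mulrzBr.
have [a0 [_ a0_unique]] := fan (\sum_r w r *+ P r).
have PQ : P = Q.
  rewrite -(a0_unique P) ?(a0_unique Q) //; split => //; apply: coneF => r /zS;
    by rewrite ffunE => ->.
move=> r; have := hz r; rewrite zPQ PQ subrr => /esym/eqP.
by rewrite mulf_eq0 intr_eq0 (negbTE N0) orbF => /eqP.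
Qed.

Lemma chow_linear_relation (deg : {ffun G -> nat} -> rat) (f : G -> rat) :
  is_chow_degree w cone deg ->
  (forall a, rat_relation a -> \sum_r a r * f r = 0) ->
  forall m, mono_deg m = d.-1 -> \sum_r f r * deg (madd m (unit_mono r)) = 0.
Proof.
move=> [_ lin _] horth m hm.
have [lam flam] := orthogonal_to_relations_form horth.
rewrite (eq_bigr (fun r => \sum_j lam j 0 *
    ((w r 0 j)%:~R * deg (madd m (unit_mono r))))); last first.
  by move=> r _; rewrite flam mxE mulr_suml; apply: eq_bigr => j _; rewrite !mxE; ring.
by rewrite exchange_big big1 // => j _; rewrite -mulr_sumr lin // mulr0.
Qed.
End ChowRelations.

Lemma sum_delta_comb (G : finType) (g : G -> rat) (x0 x1 x2 x3 : G) (c1 c2 c3 : rat) :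
  \sum_y g y * ((y == x0)%:R - c1 * (y == x1)%:R - c2 * (y == x2)%:R
                - c3 * (y == x3)%:R)
  = g x0 - c1 * g x1 - c2 * g x2 - c3 * g x3.
Proof.
have sum_delta x : \sum_y g y * (y == x)%:R = g x.
  rewrite (bigD1 x) //= eqxx mulr1 big1 ?addr0 // => y /negbTE ->.
  by rewrite mulr0.
rewrite (eq_bigr (fun y => g y * (y == x0)%:R - c1 * (g y * (y == x1)%:R)
    - c2 * (g y * (y == x2)%:R) - c3 * (g y * (y == x3)%:R))).
  by rewrite !sumrB -!mulr_sumr !sum_delta.
by move=> y _; ring.
Qed.

Section Monomials.
Variable G : finType.
Implicit Types (m : {ffun G -> nat}) (S : {set G}) (x y : G).

Lemma maddC m1 m2 : madd m1 m2 = madd m2 m1.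
Proof. by apply/ffunP => r; rewrite !ffunE addnC. Qed.

Lemma maddA m1 m2 m3 : madd m1 (madd m2 m3) = madd (madd m1 m2) m3.
Proof. by apply/ffunP => r; rewrite !ffunE addnA. Qed.

Lemma mono_deg_madd m1 m2 : mono_deg (madd m1 m2) = (mono_deg m1 + mono_deg m2)%N.
Proof. by rewrite /mono_deg -big_split; apply: eq_bigr => r _; rewrite ffunE. Qed.

Lemma mono_deg_set S : mono_deg (set_mono S) = #|S|.
Proof.
rewrite /mono_deg -sum1_card [RHS]big_mkcond; apply: eq_bigr => r _.
by rewrite ffunE; case: (r \in S).
Qed.

Lemma mono_deg_unit x : mono_deg (unit_mono x) = 1%N.
Proof.
rewrite (_ : unit_mono x = set_mono [set x]) ?mono_deg_set ?cards1 //.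
by apply/ffunP => s; rewrite !ffunE inE.
Qed.

Lemma msupp_set S : msupp (set_mono S) = S.
Proof. by apply/setP => r; rewrite !inE ffunE; case: (r \in S). Qed.

Lemma madd_pair S x y : x \notin S -> y \notin S -> x != y ->
  madd (set_mono S) (madd (unit_mono x) (unit_mono y)) = set_mono (x |: (y |: S)).
Proof.
move=> xS yS xy; apply/ffunP => r; rewrite !ffunE !inE.
case: (eqVneq r x) => [->|rx]; first by rewrite (negbTE xS) (negbTE xy).
case: (eqVneq r y) => [->|ry]; first by rewrite (negbTE yS).
by case: (r \in S).
Qed.

Lemma card_pair S x y : x \notin S -> y \notin S -> x != y ->
  #|x |: (y |: S)| = (#|S|).+2.
Proof. by move=> xS yS xy; rewrite !cardsU1 !inE (negbTE xS) (negbTE yS) (negbTE xy). Qed.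
End Monomials.

Lemma pc_cone_sub (p0 p1 p2 p3 p4 : nat) (S S' : {set gen p0 p1 p2 p3 p4}) :
  S' \subset S -> pc_cone S -> pc_cone S'.
Proof.
move=> S'S /forallP coneS; apply/forallP => k.
by apply: contra (coneS k) => /subset_trans; apply.
Qed.

Section NoFanoContraction.
Variables (d p0 p1 p2 p3 p4 : nat) (b c : nat -> nat).
Local Notation G := (gen p0 p1 p2 p3 p4).
Variable w : G -> 'rV[int]_d.
Hypotheses (p0_gt0 : (0 < p0)%N) (p1_gt0 : (0 < p1)%N) (p2_gt0 : (0 < p2)%N)
  (p3_gt0 : (0 < p3)%N) (p4_gt0 : (0 < p4)%N).
Hypothesis dimE : d = (p0 + p1 + p2 + p3 + p4 - 3)%N.
Hypothesis fan : smooth_complete_fan w pc_cone.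
Hypothesis rel_yz : \sum_(i < p1) w (gy i) + \sum_(i < p2) w (gz i) = \sum_(i < p4) w (gu i).
Hypothesis rel_tu : \sum_(i < p3) w (gt i) + \sum_(i < p4) w (gu i) = \sum_(i < p1) w (gy i).
Hypothesis rel_uv : \sum_(i < p4) w (gu i) + \sum_(i < p0) w (gv i)
    = \sum_(j < p2 | (0 < j)%N) w (gz j) *+ c j.+1
      + \sum_(i < p3) w (gt i) *+ b i.+1.

Lemma sum_by_groups (V : nmodType) (F : G -> V) :
  \sum_r F r = \sum_i F (gv i) + \sum_i F (gy i) + \sum_i F (gz i)
               + \sum_i F (gt i) + \sum_i F (gu i).
Proof. by rewrite !big_sumType. Qed.

(* c_{j+1} is the coefficient of z_{j+1} in the relations (c_1 = 0). *)
Definition zcoef (j : nat) : nat := if (0 < j)%N then c j.+1 else 0%N.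

(* Coefficients of the primitive relations of {y,z}, {t,u} and {u,v},
   written as integral relations sum_r k r * w r = 0. *)
Definition k_yz (r : G) : int := match r with
  | inl (inl (inl (inl _))) => 0 | inl (inl (inl (inr _))) => 1
  | inl (inl (inr _)) => 1 | inl (inr _) => 0 | inr _ => -1 end.
Definition k_tu (r : G) : int := match r with
  | inl (inl (inl (inl _))) => 0 | inl (inl (inl (inr _))) => -1
  | inl (inl (inr _)) => 0 | inl (inr _) => 1 | inr _ => 1 end.
Definition k_uv (r : G) : int := match r with
  | inl (inl (inl (inl _))) => 1 | inl (inl (inl (inr _))) => 0
  | inl (inl (inr j)) => - (zcoef j)%:Z | inl (inr i) => - (b i.+1)%:Z
  | inr _ => 1 end.

Lemma k_yz_relation : \sum_r w r *~ k_yz r = 0.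
Proof.
rewrite sum_by_groups /= -!mulrz_suml !mulr0z !mulr1z mulrN1z.
by rewrite add0r addr0 rel_yz subrr.
Qed.

Lemma k_tu_relation : \sum_r w r *~ k_tu r = 0.
Proof.
rewrite sum_by_groups /= -!mulrz_suml !mulr0z !mulr1z mulrN1z.
by rewrite add0r addr0 -addrA rel_tu addNr.
Qed.

Lemma k_uv_relation : \sum_r w r *~ k_uv r = 0.
Proof.
rewrite sum_by_groups /= -!mulrz_suml !mulr0z !mulr1z.
under eq_bigr do rewrite mulrNz -pmulrn.
under [X in _ + X + _]eq_bigr do rewrite mulrNz -pmulrn.
have zsum : \sum_(i < p2) w (gz i) *+ zcoef i
    = \sum_(j < p2 | (0 < j)%N) w (gz j) *+ c j.+1.
  by rewrite [RHS]big_mkcond; apply: eq_bigr => j _; rewrite /zcoef; case: ifP.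
rewrite addr0 !sumrN zsum addrAC [_ - _ + _]addrAC -[LHS]addrA -opprD.
by rewrite [\sum_(i < p0) _ + _]addrC rel_uv subrr.
Qed.

Definition rep (k : nat) : G := match k with
  | 0 => gv (Ordinal p0_gt0) | 1 => gy (Ordinal p1_gt0) | 2 => gz (Ordinal p2_gt0)
  | 3 => gt (Ordinal p3_gt0) | _ => gu (Ordinal p4_gt0) end.
Local Notation v1 := (rep 0).
Local Notation z1 := (rep 2).
Local Notation t1 := (rep 3).
Local Notation u1 := (rep 4).

Lemma grp_lt5 (r : G) : (grp r < 5)%N.
Proof. by case: r => [[[[]|]|]|]. Qed.

Lemma grp_rep (k : nat) : (k < 5)%N -> grp (rep k) = k.
Proof. by case: k => [|[|[|[|[|]]]]]. Qed.

Lemma rep_prim_coll (k : 'I_5) (m : nat) : (m < 5)%N ->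
  (rep m \in prim_coll k) = (m == k) || (m == k.+1 %% 5)%N.
Proof. by move=> m5; rewrite inE grp_rep. Qed.

Definition omit (I : seq nat) : {set G} := [set r | (grp r \notin I) || (r != rep (grp r))].

(* I meets every primitive collection (groups k and k+1 mod 5) *)
Definition covers (I : seq nat) : bool :=
  all (fun k => (k \in I) || (k.+1 %% 5 \in I)%N) (iota 0 5).

Lemma rep_omit (m : nat) I : (m < 5)%N -> (rep m \in omit I) = (m \notin I).
Proof. by move=> m5; rewrite inE grp_rep // eqxx orbF. Qed.

Lemma prim_coll_sub_omit (k : 'I_5) I :
  (prim_coll k \subset omit I) = (nat_of_ord k \notin I) && (k.+1 %% 5 \notin I)%N.
Proof.
have k5 := ltn_ord k; have k'5 : (k.+1 %% 5 < 5)%N by rewrite ltn_mod.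
apply/subsetP/andP => [sub | [kI k'I] r].
  by rewrite -!rep_omit //; split; apply: sub; rewrite rep_prim_coll ?eqxx ?orbT.
by rewrite !inE => /orP [] /eqP ->; rewrite ?kI ?k'I.
Qed.

Lemma pc_cone_omit I : pc_cone (omit I) = covers I.
Proof.
apply/forallP/allP => [cone k | cov k].
  rewrite mem_iota add0n => /andP [_ k5].
  by have := cone (Ordinal k5); rewrite prim_coll_sub_omit negb_and !negbK.
by rewrite prim_coll_sub_omit negb_and !negbK; apply: cov; rewrite mem_iota ltn_ord.
Qed.

Lemma add_rep_omit (i : nat) I : (i < 5)%N ->
  rep i |: omit I = omit [seq k <- I | k != i].
Proof.
move=> i5; apply/setP => r; rewrite !inE mem_filter negb_and negbK.
case: (eqVneq r (rep i)) => [->|ri]; first by rewrite grp_rep // !eqxx.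
case: (eqVneq (grp r) i) => [gri|]; last by [].
by rewrite gri ri !orbT.
Qed.

Lemma notin_omit (r : G) I : r \notin omit I -> r = rep (grp r) /\ grp r \in I.
Proof. by rewrite inE negb_or !negbK => /andP [gI /eqP]. Qed.

(* The rational coordinates of the generators with respect to the three
   primitive relations. *)
Definition cA (r : G) : rat := (k_yz r)%:~R.
Definition cB (r : G) : rat := (k_tu r)%:~R.
Definition cC (r : G) : rat := (k_uv r)%:~R.

Definition B : rat := (b 1)%:R.

Lemma B_ge0 : 0 <= B.
Proof. exact: ler0n. Qed.

(* The three primitive relations span all rational relations: subtracting a
   suitable combination leaves a relation supported on the cone
   omit [:: 0; 2; 3] (all generators but v1, z1, t1), which must vanish. *)
Lemma relations_span (a : G -> rat) : rat_relation w a ->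
  exists al be ga, forall r, a r = al * cA r + be * cB r + ga * cC r.
Proof.
move=> ha; pose ga := a v1; pose al := a z1; pose be := a t1 + B * ga.
exists al, be, ga.
pose a' r := a r - (al * cA r + be * cB r + ga * cC r).
have rel_a' : rat_relation w a'.
  rewrite /rat_relation (eq_bigr (fun r => a r *: wQ w r - (al *: (cA r *: wQ w r)
      + be *: (cB r *: wQ w r) + ga *: (cC r *: wQ w r)))); last first.
    by move=> r _; rewrite !scalerA -!scalerDl -scalerBl.
  rewrite sumrB !big_split -!scaler_sumr /= ha.
  rewrite (int_rat_relation k_yz_relation) (int_rat_relation k_tu_relation).
  by rewrite (int_rat_relation k_uv_relation) !scaler0 !addr0 subr0.
have cone_vzt : pc_cone (omit [:: 0; 2; 3]) by rewrite pc_cone_omit.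
have a'0 := cone_relation_trivial fan (fun S' sub => pc_cone_sub sub cone_vzt) rel_a'.
move=> r; apply/eqP; rewrite -subr_eq0; apply/eqP; apply: a'0 => {}r.
case/notin_omit => rE /[!inE] /or3P [] /eqP gr;
  rewrite rE gr /a' /be /ga /al /B /cA /cB /cC /= ?mulr0z ?mulr1z; ring.
Qed.

Lemma coords_v (i : 'I_p0) : [/\ cA (gv i) = 0, cB (gv i) = 0 & cC (gv i) = 1].
Proof. by []. Qed.
Lemma coords_y (i : 'I_p1) : [/\ cA (gy i) = 1, cB (gy i) = -1 & cC (gy i) = 0].
Proof. by []. Qed.
Lemma coords_z (i : 'I_p2) :
  [/\ cA (gz i) = 1, cB (gz i) = 0 & cC (gz i) = - (zcoef i)%:R].
Proof. by rewrite /cC /= rmorphN. Qed.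
Lemma coords_t (i : 'I_p3) :
  [/\ cA (gt i) = 0, cB (gt i) = 1 & cC (gt i) = - (b i.+1)%:R].
Proof. by rewrite /cC /= rmorphN. Qed.
Lemma coords_u (i : 'I_p4) : [/\ cA (gu i) = -1, cB (gu i) = 1 & cC (gu i) = 1].
Proof. by []. Qed.

Lemma coords_z1 : [/\ cA z1 = 1, cB z1 = 0 & cC z1 = 0].
Proof. by case: (coords_z (Ordinal p2_gt0)) => -> -> ->; rewrite oppr0. Qed.
Lemma coords_t1 : [/\ cA t1 = 0, cB t1 = 1 & cC t1 = - B].
Proof. exact: coords_t. Qed.
Lemma coords_v1 : [/\ cA v1 = 0, cB v1 = 0 & cC v1 = 1].
Proof. exact: coords_v. Qed.
Lemma coords_u1 : [/\ cA u1 = -1, cB u1 = 1 & cC u1 = 1].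
Proof. exact: coords_u. Qed.

Lemma card_gen : #|G| = (p0 + p1 + p2 + p3 + p4)%N.
Proof. by rewrite !card_sum !card_ord. Qed.

Definition tau : {set G} := omit (iota 0 5).

Lemma rep_notin_tau (k : nat) : (k < 5)%N -> rep k \notin tau.
Proof. by move=> k5; rewrite rep_omit // mem_iota add0n k5. Qed.

Lemma card_tau : #|tau| = (d - 2)%N.
Proof.
have rep_inj : injective (fun k : 'I_5 => rep k).
  by move=> k l /(congr1 grp); rewrite !grp_rep //; apply: val_inj.
have tauC : ~: tau = [set rep k | k : 'I_5].
  apply/setP => r; rewrite inE; apply/idP/imsetP => [/notin_omit [rE _] | [k _ ->]].
    by exists (Ordinal (grp_lt5 r)).
  exact: rep_notin_tau.
have := cardsC tau; rewrite tauC card_imset // card_ord card_gen dimE; lia.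
Qed.

Variable deg : {ffun G -> nat} -> rat.
Hypothesis chow_deg : is_chow_degree w pc_cone deg.

(* q x y = deg (x_tau x_x x_y): the intersection form on V(tau) *)
Definition q (x y : G) : rat :=
  deg (madd (set_mono tau) (madd (unit_mono x) (unit_mono y))).

Lemma q_sym x y : q x y = q y x.
Proof. by rewrite /q (maddC (unit_mono x)). Qed.

Lemma q_linear (s : G) (f : G -> rat) :
  \sum_r cA r * f r = 0 -> \sum_r cB r * f r = 0 -> \sum_r cC r * f r = 0 ->
  \sum_r q s r * f r = 0.
Proof.
move=> fA fB fC.
have deg_m : mono_deg (madd (set_mono tau) (unit_mono s)) = d.-1.
  by rewrite mono_deg_madd mono_deg_set mono_deg_unit card_tau dimE; lia.
rewrite -[RHS](chow_linear_relation (f := f) chow_deg _ deg_m).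
  by apply: eq_bigr => r _; rewrite /q maddA mulrC.
move=> a /relations_span [al [be [ga aE]]].
rewrite (eq_bigr (fun r => al * (cA r * f r) + be * (cB r * f r) + ga * (cC r * f r))).
  by rewrite !big_split -!mulr_sumr /= fA fB fC !mulr0 !addr0.
by move=> r _; rewrite aE; ring.
Qed.

(* the coordinate of x_r along v1 in the basis z1, t1, v1 of divisor classes *)
Definition gam (r : G) : rat := B * cB r + cC r.

Lemma q_expand (s r : G) : q s r = cA r * q s z1 + cB r * q s t1 + gam r * q s v1.
Proof.
have [zA zB zC] := coords_z1; have [tA tB tC] := coords_t1.
have [vA vB vC] := coords_v1.
have := q_linear s (f := fun y => (y == r)%:R - cA r * (y == z1)%:R
                          - cB r * (y == t1)%:R - gam r * (y == v1)%:R).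
rewrite !sum_delta_comb zA zB zC tA tB tC vA vB vC /gam.
move: (q s r) (q s z1) (q s t1) (q s v1) (cA r) (cB r) (cC r) => Q QZ QT QV a0 b0 c0.
move=> /(_ ltac:(ring) ltac:(ring) ltac:(ring)) h.
by apply/eqP; rewrite -subr_eq0; apply/eqP; rewrite -[RHS]h; ring.
Qed.

Lemma q_reps (i j : nat) : (i < 5)%N -> (j < 5)%N -> i != j ->
  q (rep i) (rep j) = (covers [seq k <- [seq k <- iota 0 5 | k != j] | k != i])%:R.
Proof.
move=> i5 j5 ij.
have rij : rep i != rep j by apply: contra ij => /eqP /(congr1 grp); rewrite !grp_rep // => ->.
have card_ij : #|rep i |: (rep j |: tau)| = d.
  by rewrite card_pair ?rep_notin_tau // card_tau dimE; lia.
rewrite /q madd_pair ?rep_notin_tau //; move: card_ij.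
rewrite /tau !add_rep_omit // -pc_cone_omit => card_ij.
case: chow_deg => vanish _ one; case cone: (pc_cone _); first exact: one.
by apply: vanish; rewrite ?mono_deg_set ?msupp_set ?cone.
Qed.

(* Among v1, z1, t1, u1 only the pairs {z,t}, {t,u} and {u,v} lie in a common
   primitive collection. *)
Lemma q_z1u1 : q z1 u1 = 1. Proof. by rewrite q_reps. Qed.
Lemma q_z1v1 : q z1 v1 = 1. Proof. by rewrite q_reps. Qed.
Lemma q_t1v1 : q t1 v1 = 1. Proof. by rewrite q_reps. Qed.
Lemma q_z1t1 : q z1 t1 = 0. Proof. by rewrite q_reps. Qed.
Lemma q_t1u1 : q t1 u1 = 0. Proof. by rewrite q_reps. Qed.
Lemma q_v1u1 : q v1 u1 = 0. Proof. by rewrite q_reps. Qed.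

Lemma q_u1 (s : G) : q s u1 = - q s z1 + q s t1 + (B + 1) * q s v1.
Proof.
have [uA uB uC] := coords_u1.
by rewrite q_expand /gam uA uB uC; move: (q s z1) (q s t1) (q s v1) => ? ? ?; ring.
Qed.

(* Pairing q_u1 with z1, t1, v1 gives the remaining values of q on them. *)
Lemma q_z1z1 : q z1 z1 = B.
Proof. by have := q_u1 z1; rewrite q_z1u1 q_z1t1 q_z1v1; move: (q z1 z1) => ?; lra. Qed.

Lemma q_t1t1 : q t1 t1 = - (B + 1).
Proof.
by have := q_u1 t1; rewrite q_t1u1 (q_sym t1) q_z1t1 q_t1v1; move: (q t1 t1) => ?; lra.
Qed.

Lemma q_v1v1 : q v1 v1 = 0.
Proof.
have := q_u1 v1; rewrite q_v1u1 (q_sym v1 z1) q_z1v1 (q_sym v1 t1) q_t1v1.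
move: (q v1 v1) => Q h; have BQ : (B + 1) * Q = 0 by move: h; lra.
have B1 : 0 < B + 1 by have := B_ge0; lra.
by move/eqP: BQ; rewrite mulf_eq0 gt_eqF //= => /eqP.
Qed.

Lemma q_self (r : G) :
  q r r = cA r ^+ 2 * B - cB r ^+ 2 * (B + 1) + 2 * (cA r + cB r) * gam r.
Proof.
rewrite {1}q_expand (q_sym r z1) (q_sym r t1) (q_sym r v1).
rewrite (q_expand z1 r) (q_expand t1 r) (q_expand v1 r).
rewrite q_z1z1 q_z1t1 q_z1v1 (q_sym t1 z1) q_z1t1 q_t1t1 q_t1v1.
rewrite (q_sym v1 z1) q_z1v1 (q_sym v1 t1) q_t1v1 q_v1v1.
by move: (cA r) (cB r) (gam r) => ? ? ?; ring.
Qed.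

Hypothesis b1_min : forall i, (1 <= i <= p3)%N -> (b 1 <= b i)%N.

(* Summing q(r, r) group by group: it is 0 on v, -1 on y and u, at most b1 on
   z and at most -(b1 + 1) on t (since b_i >= b1). *)
Lemma sum_q_self_le :
  \sum_r q r r <= - p1%:R + p2%:R * B - p3%:R * (B + 1) - p4%:R.
Proof.
have const (n : nat) (F : 'I_n -> rat) (x : rat) :
    (forall i, F i = x) -> \sum_i F i = n%:R * x.
  by move=> Fx; rewrite (eq_bigr _ (fun i _ => Fx i)) sumr_const card_ord mulr_natl.
have bound (n : nat) (F : 'I_n -> rat) (x : rat) :
    (forall i, F i <= x) -> \sum_i F i <= n%:R * x.
  move=> Fx; apply: le_trans (ler_sum _ (fun i _ => Fx i)) _.
  by rewrite sumr_const card_ord mulr_natl.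
have sv : \sum_i q (gv i) (gv i) = p0%:R * 0.
  by apply: const => i; rewrite q_self /gam; have [-> -> ->] := coords_v i; ring.
have sy : \sum_i q (gy i) (gy i) = p1%:R * (-1).
  by apply: const => i; rewrite q_self /gam; have [-> -> ->] := coords_y i; ring.
have su : \sum_i q (gu i) (gu i) = p4%:R * (-1).
  by apply: const => i; rewrite q_self /gam; have [-> -> ->] := coords_u i; ring.
have sz : \sum_i q (gz i) (gz i) <= p2%:R * B.
  apply: bound => i; rewrite q_self /gam; have [-> -> ->] := coords_z i.
  by have := ler0n rat (zcoef i); lra.
have st : \sum_i q (gt i) (gt i) <= p3%:R * (- (B + 1)).
  apply: bound => i; rewrite q_self /gam; have [-> -> ->] := coords_t i.
  have : B <= (b i.+1)%:R by rewrite ler_nat b1_min // ltnS ltn_ord.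
  lra.
rewrite sum_by_groups sv sy su; lra.
Qed.

Lemma nef_on_tau_bounds :
  (forall S, pc_cone S -> #|S| = (d - 2)%N -> 0 <= ch2_dot deg S) ->
  (1 <= b 1)%N /\ (p3 < p2)%N /\ (2 <= p2)%N.
Proof.
move=> nef; have tau_cone : pc_cone tau by rewrite pc_cone_omit.
have sum_ge0 : 0 <= \sum_r q r r.
  by have := nef _ tau_cone card_tau; rewrite /ch2_dot pmulr_rge0.
have key : (p1 + p3 * (b 1).+1 + p4 <= p2 * b 1)%N.
  by rewrite -(ler_nat rat) !natrD !natrM; have := sum_q_self_le; rewrite /B; lra.
have b1_gt0 : (0 < b 1)%N by move: key; case: (b 1) => //; lia.
have : (p3 * b 1 < p2 * b 1)%N by lia.
by rewrite ltn_pmul2r // => p3p2; split => //; split => //; lia.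
Qed.
End NoFanoContraction.

Theorem lemma3p2 (d p0 p1 p2 p3 p4 : nat) (b c : nat -> nat)
    (w : gen p0 p1 p2 p3 p4 -> 'rV[int]_d) :
  (0 < p0)%N -> (0 < p1)%N -> (0 < p2)%N -> (0 < p3)%N -> (0 < p4)%N ->
  d = (p0 + p1 + p2 + p3 + p4 - 3)%N ->
  smooth_complete_fan w pc_cone ->
  \sum_(i < p0) w (gv i) + \sum_(i < p1) w (gy i)
    = \sum_(j < p2 | (0 < j)%N) w (gz j) *+ c j.+1
      + \sum_(i < p3) w (gt i) *+ (b i.+1).+1 ->
  \sum_(i < p1) w (gy i) + \sum_(i < p2) w (gz i) = \sum_(i < p4) w (gu i) ->
  \sum_(i < p2) w (gz i) + \sum_(i < p3) w (gt i) = 0 ->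
  \sum_(i < p3) w (gt i) + \sum_(i < p4) w (gu i) = \sum_(i < p1) w (gy i) ->
  \sum_(i < p4) w (gu i) + \sum_(i < p0) w (gv i)
    = \sum_(j < p2 | (0 < j)%N) w (gz j) *+ c j.+1
      + \sum_(i < p3) w (gt i) *+ b i.+1 ->
  (forall i, (1 <= i <= p3)%N -> (b 1 <= b i)%N) ->
  (forall j, (2 <= j <= p2)%N -> (c 2 <= c j)%N) ->
  ch2_nef w pc_cone ->
  (1 <= b 1)%N /\ (p3 < p2)%N /\ (2 <= p2)%N.
Proof.
move=> p0_gt0 p1_gt0 p2_gt0 p3_gt0 p4_gt0 dimE fan _ rel_yz _ rel_tu rel_uv b1_min _.
case=> deg [chow_deg nef].
exact: (nef_on_tau_bounds p0_gt0 p1_gt0 p2_gt0 p3_gt0 p4_gt0 dimE fan rel_yz rel_tu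
          rel_uv chow_deg b1_min nef).
Qed.
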